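(* Let $q\in X^*\setminus\{e\}$ and let $\lambda_q$ be the largest positive real root of $\mathfrak{p}_q(t):=t^{|q|}-\sum_{v\in\sqrt[*]{P_q}}t^{|q|-|v|}$. There is a constant $c>0$ depending only on $q$ such that every $\xi\in X^\omega$ that is quasiperiodic with quasiperiod $q$ satisfies $f(\xi,n)\le c\cdot\lambda_q^n$ for all $n\in\mathbb{N}$.
   Context: $X$ is a finite alphabet with $|X|\ge2$; $X^*$ the finite words (empty word $e$), $X^\omega$ the infinite words, $X^n$ the words of length $n$. $w\sqsubseteq\eta$ means $w$ is a prefix of $\eta$, $w\sqsubset\eta$ a proper prefix. An $\omega$-word $\xi$ is quasiperiodic with quasiperiod $q$ if for every $j\in\mathbb{N}$ there is a prefix $u_j\sqsubseteq\xi$ with $j-|q|<|u_j|\le j$ and $u_j\cdot q\sqsubseteq\xi$. $f(\xi,n):=|\mathrm{infix}(\xi)\cap X^n|$ is the number of distinct factors (subwords) of $\xi$ of length $n$. $P_q:=\{v: e\sqsubset v\sqsubseteq q\sqsubset v\cdot q\}$, and $\sqrt[*]{P_q}:=P_q\setminus(P_q^2\cdot P_q^* )$ (elements of $P_q$ not a concatenation of two or more elements of $P_q$). *)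

From Stdlib Require Import Reals ClassicalEpsilon.
From mathcomp Require Import all_boot.
Set Implicit Arguments. Unset Strict Implicit. Unset Printing Implicit Defensive.

Definition decP (P : Prop) : bool :=
  if excluded_middle_informative P then true else false.

Section Words.
Variable X : finType.

(* xi is quasiperiodic with quasiperiod q: for every j there is a prefix u_j of
   xi (determined by its length m) with j - |q| < m <= j and u_j q a prefix of xi *)
Definition quasiperiodic (q : seq X) (xi : nat -> X) : Prop :=
  forall j : nat, exists m : nat,
    (j < m + size q)%N /\ (m <= j)%N /\
    (forall i, (i < size q)%N -> xi (m + i)%N = nth (xi 0%N) q i).

Definition is_factor (xi : nat -> X) (w : seq X) : Prop :=
  exists i : nat, forall k, (k < size w)%N -> xi (i + k)%N = nth (xi 0%N) w k.

Definition fcompl (xi : nat -> X) (n : nat) : nat :=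
  #|[set w : n.-tuple X | decP (is_factor xi w)]|.

(* P_q = { v : e < v <= q < v q } ; all elements are nonempty prefixes of q *)
Definition Pq (q : seq X) : seq (seq X) :=
  [seq take k q | k <- iota 1 (size q) & prefix q (take k q ++ q) && (q != take k q ++ q)].

Definition Pq_decomposable (q : seq X) (v : seq X) : Prop :=
  exists s : seq (seq X), (2 <= size s)%N /\ all (fun u => u \in Pq q) s /\ flatten s = v.

Definition Pq_root (q : seq X) : seq (seq X) :=
  [seq v <- Pq q | decP (~ Pq_decomposable q v)].

Definition pq_eval (q : seq X) (t : R) : R :=
  Rminus (pow t (size q)) (foldr Rplus R0 [seq pow t (size q - size v) | v <- Pq_root q]).

End Words.

(* Let K = |q| and A = sqrt*(P_q); every element of P_q is a concatenation of
   elements of A.  Between two consecutive occurrences of q in a quasiperiodic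
   xi (at distance at most K) lies an element of P_q, so every factor of length
   n of xi sits, at offset below K, inside a concatenation of elements of A of
   length between n and n + 2K.  The root equation lam^K = sum_(v in A)
   lam^(K - |v|) says that the weights lam^(-|v|) sum to 1, which gives by
   induction at most lam^L concatenations of length L.  Hence
   f(xi, n) <= K * 2K * (1 + lam)^(2K) * lam^n. *)
From Pilot Require Import Defs.
From Stdlib Require Import Reals Lra ClassicalEpsilon.
From mathcomp Require Import all_boot zify.
Set Implicit Arguments. Unset Strict Implicit. Unset Printing Implicit Defensive.

(* MathComp rebinds the key [R] to its ring_scope; take it back for the reals. *)
Local Delimit Scope R_scope with R.

Lemma decPP (P : Prop) : reflect P (Defs.decP P).
Proof. rewrite /Defs.decP; by case: (excluded_middle_informative P) => h; constructor. Qed.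

Definition sumR (T : Type) (g : T -> R) (s : seq T) : R := foldr Rplus R0 (map g s).

Lemma sumR_le (T : eqType) (g h : T -> R) (s : seq T) :
  {in s, forall x, (g x <= h x)%R} -> (sumR g s <= sumR h s)%R.
Proof.
elim: s => [|x s IH] gh; first exact: Rle_refl.
apply: Rplus_le_compat; first by apply: gh; rewrite mem_head.
by apply: IH => y ys; apply: gh; rewrite inE ys orbT.
Qed.

Lemma sumR_const (T : Type) (c : R) (s : seq T) :
  sumR (fun=> c) s = (INR (size s) * c)%R.
Proof.
elim: s => [|x s IH]; first by rewrite /sumR /=; ring.
by rewrite [size _]/= S_INR Rmult_plus_distr_r -IH Rmult_1_l Rplus_comm.
Qed.

Lemma INR_size_flatten (T U : Type) (g : T -> seq U) (s : seq T) :
  INR (size (flatten (map g s))) = sumR (fun x => INR (size (g x))) s.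
Proof. by elim: s => //= x s IH; rewrite size_cat plus_INR IH. Qed.

Lemma pow_le_pow_mul_succ (lam : R) (n L k : nat) :
  (0 <= lam)%R -> n <= L <= n + k -> (lam ^ L <= lam ^ n * (1 + lam) ^ k)%R.
Proof.
move=> lam_ge0 /andP [nL Lnk].
have -> : L = (n + (L - n))%coq_nat by lia.
rewrite pow_add; apply: Rmult_le_compat_l; first exact: pow_le.
apply: (Rle_trans _ ((1 + lam) ^ (L - n))).
  by apply: pow_incr; lra.
by apply: Rle_pow; [lra | lia].
Qed.

Section Segments.
Variable T : Type.
Implicit Types (xi : nat -> T) (w : seq T).

Definition segment xi (m m' : nat) : seq T := map xi (iota m (m' - m)).

Lemma size_segment xi m m' : size (segment xi m m') = m' - m.
Proof. by rewrite size_map size_iota. Qed.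

Lemma segment_cat xi m m1 m2 :
  m <= m1 <= m2 -> segment xi m m2 = segment xi m m1 ++ segment xi m1 m2.
Proof.
move=> /andP [mm1 m1m2]; rewrite /segment -map_cat.
have -> : m2 - m = (m1 - m + (m2 - m1))%N by lia.
by rewrite iotaD; congr (map _ (_ ++ iota _ _)); lia.
Qed.

Lemma take_drop_segment xi m p n m' :
  m <= p -> p + n <= m' -> take n (drop (p - m) (segment xi m m')) = segment xi p (p + n).
Proof.
move=> mp pnm'.
rewrite (@segment_cat _ m p) ?mp //=; last lia.
rewrite drop_size_cat ?size_segment // (@segment_cat _ p (p + n)); last lia.
by rewrite take_size_cat // size_segment; lia.
Qed.

Lemma segment_nth xi m w :
  (forall i, i < size w -> xi (m + i) = nth (xi 0) w i) -> segment xi m (m + size w) = w.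
Proof.
move=> xi_w; apply: (@eq_from_nth _ (xi 0)); rewrite size_segment; first lia.
move=> i lti; rewrite (nth_map 0) ?size_iota ?nth_iota; try lia.
by rewrite xi_w //; lia.
Qed.

End Segments.

Lemma leq_size_flatten (T : eqType) (s : seq (seq T)) :
  {in s, forall u, 0 < size u} -> size s <= size (flatten s).
Proof.
elim: s => //= u s IH pos; rewrite size_cat.
have := pos u (mem_head _ _); have := IH (fun v vs => pos v (mem_behead (s := u :: s) vs)); lia.
Qed.

Lemma size_lt_flatten (T : eqType) (s : seq (seq T)) u :
  1 < size s -> {in s, forall v, 0 < size v} -> u \in s -> size u < size (flatten s).
Proof.
move=> + + us; case/splitPr: us => s1 s2 s_gt1 pos.
have pos1 : {in s1, forall v, 0 < size v} by move=> v vs; apply: pos; rewrite mem_cat vs.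
have pos2 : {in s2, forall v, 0 < size v}.
  by move=> v vs; apply: pos; rewrite mem_cat inE vs !orbT.
rewrite size_cat /= in s_gt1.
rewrite flatten_cat /= !size_cat.
have := leq_size_flatten pos1; have := leq_size_flatten pos2; lia.
Qed.

Section Factorizations.
Variables (T : eqType) (A : seq (seq T)).

Definition factorizable (w : seq T) : Prop :=
  exists2 s : seq (seq T), {subset s <= A} & flatten s = w.

Lemma factorizable_nil : factorizable [::].
Proof. by exists [::]. Qed.

Lemma factorizable_cat w1 w2 :
  factorizable w1 -> factorizable w2 -> factorizable (w1 ++ w2).
Proof.
move=> [s1 s1A <-] [s2 s2A <-]; exists (s1 ++ s2); last exact: flatten_cat.
by move=> u; rewrite mem_cat => /orP [/s1A | /s2A].
Qed.

Lemma factorizable_flatten (s : seq (seq T)) :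
  (forall u, u \in s -> factorizable u) -> factorizable (flatten s).
Proof.
elim: s => [|u s IH] fs; first exact: factorizable_nil.
apply: factorizable_cat; first by apply: fs; rewrite mem_head.
by apply: IH => v vs; apply: fs; rewrite inE vs orbT.
Qed.

End Factorizations.

Lemma sumR_pow_filter_mul_le (T : eqType) (B : seq (seq T)) (lam : R) (K L : nat) :
  (0 <= lam)%R -> {in B, forall v, size v <= K} ->
  (sumR (fun v => lam ^ (L - size v)%N) [seq v <- B | (size v <= L)%N] * lam ^ K
     <= lam ^ L * sumR (fun v => lam ^ (K - size v)%N) B)%R.
Proof.
move=> lam_ge0; elim: B => [|v B IH] BK; first by rewrite /sumR /=; lra.
have vK := BK v (mem_head _ _).
have {IH} := IH (fun u uB => BK u (mem_behead (s := v :: B) uB)).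
have pos : (0 <= lam ^ L * lam ^ (K - size v))%R by apply: Rmult_le_pos; apply: pow_le.
rewrite /sumR /=; case: ifP => vL /= IH; rewrite ?Rmult_plus_distr_r Rmult_plus_distr_l; last lra.
have -> : (lam ^ (L - size v)%N * lam ^ K = lam ^ L * lam ^ (K - size v)%N)%R.
  by rewrite -!pow_add; congr pow; lia.
lra.
Qed.

Section Concatenations.
Variables (T : eqType) (A : seq (seq T)).

(* One entry per factorization of a word of length L into at most f factors from A. *)
Fixpoint cat_words (f L : nat) : seq (seq T) :=
  if L == 0 then [:: [::]] else
  if f is f'.+1 then
    flatten [seq [seq v ++ w | w <- cat_words f' (L - size v)] | v <- A & size v <= L]
  else [::].

Lemma flatten_in_cat_words (s : seq (seq T)) f :
  {subset s <= A} -> size s <= f -> flatten s \in cat_words f (size (flatten s)).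
Proof.
elim: s f => [|v s IH] f sA sf; first by case: f {sf}.
case: f sf => // f; rewrite ltnS => sf /=.
rewrite size_cat; case: eqP => [/eqP | _].
  by rewrite addn_eq0 => /andP [/nilP -> /nilP ->]; rewrite mem_seq1.
apply/flatten_mapP; exists v; first by rewrite mem_filter leq_addr sA ?mem_head.
apply: map_f; rewrite addKn; apply: IH => // u us; by apply: sA; rewrite inE us orbT.
Qed.

Lemma size_cat_words (lam : R) (K : nat) :
  (0 < lam)%R -> {in A, forall v, size v <= K} ->
  (lam ^ K = sumR (fun v => lam ^ (K - size v)%N) A)%R ->
  forall f L, (INR (size (cat_words f L)) <= lam ^ L)%R.
Proof.
move=> lam_gt0 AK root; elim=> [|f IH] L /=; case: eqP => [-> | _] /=; try lra.
  by apply: pow_le; lra.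
rewrite INR_size_flatten.
apply: (Rle_trans _ (sumR (fun v => lam ^ (L - size v)%N)%R [seq v <- A | size v <= L])).
  by apply: sumR_le => v _; rewrite size_map.
apply: (Rmult_le_reg_r (lam ^ K)%R); first exact: pow_lt.
by rewrite {2}root; apply: sumR_pow_filter_mul_le => //; lra.
Qed.

Definition window_words (K n : nat) : seq (seq T) :=
  [seq take n (drop d u) | d <- iota 0 K, u <- flatten [seq cat_words L L | L <- iota n (2 * K)]].

Lemma size_window_words (lam : R) (K n : nat) :
  (0 < lam)%R -> {in A, forall v, size v <= K} ->
  (lam ^ K = sumR (fun v => lam ^ (K - size v)%N) A)%R ->
  (INR (size (window_words K n)) <= INR K * (INR (2 * K) * (1 + lam) ^ (2 * K)) * lam ^ n)%R.
Proof.
move=> lam_gt0 AK root; rewrite size_allpairs size_iota mult_INR INR_size_flatten.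
set M := ((1 + lam) ^ (2 * K))%R.
have -> : (INR K * (INR (2 * K) * M) * lam ^ n = INR K * (INR (2 * K) * (lam ^ n * M)))%R.
  by ring.
apply: Rmult_le_compat_l; first exact: pos_INR.
apply: (Rle_trans _ (sumR (fun=> lam ^ n * M) (iota n (2 * K)))%R); last first.
  by rewrite sumR_const size_iota; right.
apply: sumR_le => L; rewrite mem_iota => /andP [nL Ln].
apply: Rle_trans (size_cat_words lam_gt0 AK root L L) _.
by apply: pow_le_pow_mul_succ; [lra | lia].
Qed.

End Concatenations.

Section Words.
Variable X : finType.
Implicit Types (q v w : seq X) (xi : nat -> X).

Lemma quasiperiodicP q xi : quasiperiodic q xi ->
  forall j, exists m, [/\ j < m + size q, m <= j & segment xi m (m + size q) = q].
Proof.
by move=> qp j; have [m [jm [mj occ]]] := qp j; exists m; split; rewrite ?segment_nth.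
Qed.

Lemma is_factorP xi w : is_factor xi w -> exists p, segment xi p (p + size w) = w.
Proof. by move=> [p occ]; exists p; rewrite segment_nth. Qed.

Lemma Pq_size q v : v \in Pq q -> 0 < size v <= size q.
Proof.
case/mapP => k; rewrite mem_filter mem_iota => /andP [_ /andP [k_gt0 k_lt]] ->.
by rewrite size_takel; lia.
Qed.

Lemma Pq_root_sub q : {subset Pq_root q <= Pq q}.
Proof. by move=> v; rewrite mem_filter => /andP []. Qed.

Lemma Pq_factorizable q v : v \in Pq q -> factorizable (Pq_root q) v.
Proof.
have [N] := ubnP (size v); elim: N v => // N IH v /ltnSE vN vP.
have [[s [s_gt1 [sP fs]]] | undec] := decPP (Pq_decomposable q v); last first.
  exists [:: v]; last by rewrite /= cats0.
  by move=> u; rewrite inE => /eqP ->; rewrite mem_filter vP andbT; apply/decPP.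
subst v; apply: factorizable_flatten => u us.
have pos : {in s, forall u, 0 < size u} by move=> x /(allP sP) /Pq_size /andP [].
exact: IH (leq_trans (size_lt_flatten s_gt1 pos us) vN) (allP sP u us).
Qed.

(* Two occurrences of q at distance g <= |q| overlap, so the gap is a period of q. *)
Lemma segment_gap_in_Pq q xi m m1 :
  m < m1 <= m + size q -> segment xi m (m + size q) = q ->
  segment xi m1 (m1 + size q) = q -> segment xi m m1 \in Pq q.
Proof.
move=> /andP [mm1 m1q] occ occ1.
have gap : segment xi m m1 = take (m1 - m) q.
  by rewrite -occ (@segment_cat _ _ m m1 (m + size q)) ?take_size_cat ?size_segment //; lia.
have gapq : take (m1 - m) q ++ q = q ++ segment xi (m + size q) (m1 + size q).
  transitivity (segment xi m (m1 + size q)).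
    by rewrite (@segment_cat _ _ m m1 (m1 + size q)) -?gap ?occ1 //; lia.
  by rewrite (@segment_cat _ _ m (m + size q) (m1 + size q)) ?occ //; lia.
apply/mapP; exists (m1 - m) => //.
rewrite mem_filter mem_iota /= gapq prefix_prefix /=; apply/andP; split; last lia.
by apply/eqP => /(congr1 size); rewrite size_cat size_segment; lia.
Qed.

Lemma quasiperiodic_factorizable q xi m T : quasiperiodic q xi ->
  segment xi m (m + size q) = q -> m <= T ->
  exists2 m', T <= m' <= T + size q & factorizable (Pq_root q) (segment xi m m').
Proof.
move=> /quasiperiodicP qp.
have [N] := ubnP (T - m); elim: N m => // N IH m /ltnSE TmN occ mT.
have [m1 [lt_m1 le_m1 occ1]] := qp (m + size q).
have gap := @segment_gap_in_Pq q xi m m1 ltac:(lia) occ occ1.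
have [m1T | Tm1] := leqP m1 T.
  have [m' m'T fm'] := IH m1 ltac:(lia) occ1 m1T.
  exists m' => //; rewrite (@segment_cat _ _ m m1 m'); last lia.
  exact: factorizable_cat (Pq_factorizable gap) fm'.
by exists m1; [lia | exact: Pq_factorizable].
Qed.

Lemma quasiperiodic_factor_window q xi w : quasiperiodic q xi -> is_factor xi w ->
  exists d u, [/\ d < size q, size w <= size u < size w + 2 * size q,
                   factorizable (Pq_root q) u & take (size w) (drop d u) = w].
Proof.
move=> qp /is_factorP [p occ_w].
have [m0 [pm0 m0p occ0]] := quasiperiodicP qp p.
have [m' m'_bd fm'] := @quasiperiodic_factorizable q xi m0 (p + size w) qp occ0 ltac:(lia).
exists (p - m0), (segment xi m0 m'); split => //; first lia.
  by rewrite size_segment; lia.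
by rewrite take_drop_segment ?occ_w //; lia.
Qed.

Lemma quasiperiodic_factor_in_window q xi w : quasiperiodic q xi -> is_factor xi w ->
  w \in window_words (Pq_root q) (size q) (size w).
Proof.
move=> qp /(quasiperiodic_factor_window qp) [d [u [dq uw [s sA us] wE]]].
rewrite -{1}wE.
apply: allpairs_f; first by rewrite mem_iota.
apply/flatten_mapP; exists (size u); first by rewrite mem_iota; lia.
rewrite -us; apply: flatten_in_cat_words => //.
by apply: leq_size_flatten => v /sA /Pq_root_sub /Pq_size /andP [].
Qed.

End Words.

Lemma card_tuples_le_size (T : finType) (n : nat) (P : pred (n.-tuple T)) (Z : seq (seq T)) :
  (forall w, P w -> val w \in Z) -> #|[set w | P w]| <= size Z.
Proof.
move=> PZ; rewrite cardE -(size_map val).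
apply: uniq_leq_size; first by rewrite (map_inj_uniq val_inj) enum_uniq.
by move=> x /mapP [w]; rewrite mem_enum inE => /PZ wZ ->.
Qed.

Theorem lemma6 (X : finType) (hX : (1 < #|X|)%N) (q : seq X) (hq : q != [::])
  (lam : R) (hlam_pos : Rlt R0 lam) (hlam_root : pq_eval q lam = R0)
  (hlam_max : forall t : R, Rlt R0 t -> pq_eval q t = R0 -> Rle t lam) :
  exists c : R, Rlt R0 c /\
    forall xi : nat -> X, quasiperiodic q xi ->
      forall n : nat, Rle (INR (fcompl xi n)) (Rmult c (pow lam n)).
Proof.
(* Only [lam > 0] and [p_q(lam) = 0] are used: any positive root gives the bound. *)
set K := size q; set A := Pq_root q.
have A_le : {in A, forall v, size v <= K} by move=> v /Pq_root_sub /Pq_size /andP [].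
have root : (lam ^ K = sumR (fun v => lam ^ (K - size v)%N) A)%R.
  by have : (lam ^ K - sumR (fun v => lam ^ (K - size v)%N) A = 0)%R := hlam_root; lra.
have K_gt0 : 0 < K by rewrite lt0n size_eq0.
exists (INR K * (INR (2 * K) * (1 + lam) ^ (2 * K)))%R; split.
  apply: Rmult_lt_0_compat; [|apply: Rmult_lt_0_compat]; try (apply: lt_0_INR; lia).
  by apply: pow_lt; lra.
move=> xi qp n; apply: Rle_trans (size_window_words n hlam_pos A_le root).
apply: le_INR; apply/leP; apply: card_tuples_le_size => w /decPP.
by move/(quasiperiodic_factor_in_window qp); rewrite size_tuple.
Qed.
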